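(* Let $M$ be a finite monoid and $k$ a field. Suppose there exist two irreducible elements $p,q\in M$ that are not associates. Define $f: M\to k[x,y]/\langle x^2,y^2,xy\rangle$ by $$f(m)=\begin{cases}1 & \text{if } m \text{ is a unit},\\ x & \text{if } m \text{ and } p \text{ are associates},\\ y & \text{if } m \text{ and } q \text{ are associates},\\ 0 & \text{otherwise}.\end{cases}$$ Then $f$ is a well-defined homomorphism of monoids (into the multiplicative monoid of the algebra), and it induces a surjective $k$-algebra homomorphism from the monoid algebra $kM$ onto $k[x,y]/\langle x^2,y^2,xy\rangle$.
   Context: A non-unit $p$ in a monoid $M$ is irreducible if whenever $p=ab$ with $a,b\in M$, then $a$ is a unit or $b$ is a unit. Two elements $a,b\in M$ are associates if there exist units $u,v\in M$ with $a=ubv$. $kM$ denotes the monoid algebra of $M$ over $k$. *)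

From HB Require Import structures.
From mathcomp Require Import all_boot all_order all_algebra.
From mathcomp Require Import mpoly.
Set Implicit Arguments. Unset Strict Implicit. Unset Printing Implicit Defensive.
Import GRing.Theory.
Local Open Scope ring_scope.

Section MonoidDefs.
Variables (M : finType) (one : M) (mul : Monoid.law one).

Definition is_unitM (u : M) : bool :=
  [exists v : M, (mul u v == one) && (mul v u == one)].

Definition irreducibleM (p : M) : bool :=
  ~~ is_unitM p &&
  [forall a : M, forall b : M, (p == mul a b) ==> (is_unitM a || is_unitM b)].

Definition associatesM (a b : M) : bool :=
  [exists u : M, exists v : M,
     [&& is_unitM u, is_unitM v & a == mul u (mul b v)]].
End MonoidDefs.

Section Target.
Variable k : fieldType.

Definition varx : {mpoly k[2]} := 'X_(@Ordinal 2 0 isT).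
Definition vary : {mpoly k[2]} := 'X_(@Ordinal 2 1 isT).

Definition in_idealI (P : {mpoly k[2]}) : Prop :=
  exists a b c : {mpoly k[2]},
    P = a * (varx * varx) + b * (vary * vary) + c * (varx * vary).

Definition eqmodI (P Q : {mpoly k[2]}) : Prop := in_idealI (P - Q).
End Target.

Section MapDefs.
Variables (M : finType) (one : M) (mul : Monoid.law one) (k : fieldType).
Variables (p q : M).

(* f : M -> k[x,y]/<x^2,y^2,xy>, given by representatives in k[x,y]. *)
Definition fmap (m : M) : {mpoly k[2]} :=
  if is_unitM mul m then 1
  else if associatesM mul m p then varx k
  else if associatesM mul m q then vary k
  else 0.

(* The monoid algebra kM: since M is finite, its elements are all
   functions M -> k, with convolution product and unit delta_one. *)
Definition kM_mul (a b : {ffun M -> k}) : {ffun M -> k} :=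
  [ffun m => \sum_(u : M) \sum_(v : M | mul u v == m) a u * b v].

Definition kM_delta (m : M) : {ffun M -> k} :=
  [ffun m' => if m' == m then 1 else 0].

Definition Fmap (a : {ffun M -> k}) : {mpoly k[2]} :=
  \sum_(m : M) a m *: fmap m.
End MapDefs.

Arguments is_unitM {M one} mul u.
Arguments irreducibleM {M one} mul p.
Arguments associatesM {M one} mul a b.
Arguments fmap {M one} mul k p q m.
Arguments kM_mul {M one} mul {k} a b.
Arguments kM_delta {M} k m.
Arguments Fmap {M one} mul k p q a.

(* The map f collapses M onto three associate classes: the units go to 1,
   the class of p to x, the class of q to y, and everything else to 0.
   Multiplying by a unit does not change the associate class, so f is
   multiplicative as soon as one factor is a unit.  If neither factor is a
   unit, the product is not a unit either (in a finite monoid one-sided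
   inverses are two-sided), and it is not associate to an irreducible
   element, so it goes to 0; on the other side, the product of two elements
   of the ideal (x, y) vanishes modulo (x^2, y^2, xy).  The linear extension
   to kM is then multiplicative modulo the ideal, and it is onto because
   every polynomial is congruent to some c0 + c1 x + c2 y. *)
From HB Require Import structures.
From mathcomp Require Import all_boot all_order all_algebra.
From mathcomp Require Import mpoly.
From mathcomp Require Import ring.
Import GRing.Theory.
Local Open Scope ring_scope.
Set Implicit Arguments. Unset Strict Implicit.

Section FiniteMonoid.
Variables (M : finType) (one : M) (mul : Monoid.law one).
Local Notation "a ** b" := (mul a b) (at level 40, left associativity).
Local Notation unit := (is_unitM mul).
Local Notation assoc := (associatesM mul).

Lemma mulmA a b c : a ** (b ** c) = a ** b ** c. Proof. exact: Monoid.mulmA. Qed.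
Lemma mul1m a : one ** a = a. Proof. exact: Monoid.mul1m. Qed.
Lemma mulm1 a : a ** one = a. Proof. exact: Monoid.mulm1. Qed.

(* Left multiplication by b is injective, hence bijective on the finite M. *)
Lemma mulm_eq1_sym a b : a ** b = one -> b ** a = one.
Proof.
move=> ab1; have mulbK : cancel (mul b) (mul a) by move=> x; rewrite mulmA ab1 mul1m.
have [g _ mulbg] := injF_bij (can_inj mulbK).
have mulaE x : a ** x = g x by rewrite -{1}(mulbg x) mulbK.
by have := mulbg one; rewrite -mulaE mulm1.
Qed.

Lemma is_unitMP u : reflect (exists v, u ** v = one /\ v ** u = one) (unit u).
Proof.
apply: (iffP existsP) => [[v /andP[/eqP uv /eqP vu]]|[v [uv vu]]]; exists v => //.
by rewrite uv vu !eqxx.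
Qed.

Lemma is_unitM1 : unit one. Proof. by apply/is_unitMP; exists one; rewrite mul1m. Qed.

Lemma is_unitM_inv u : unit u -> exists2 v, unit v & u ** v = one /\ v ** u = one.
Proof. by move=> /is_unitMP[v [uv vu]]; exists v => //; apply/is_unitMP; exists u. Qed.

Lemma is_unitMM a b : unit a -> unit b -> unit (a ** b).
Proof.
move=> /is_unitMP[a' [aa' a'a]] /is_unitMP[b' [bb' b'b]].
apply/is_unitMP; exists (b' ** a'); split.
  by rewrite -mulmA (mulmA b) bb' mul1m.
by rewrite -mulmA (mulmA a') a'a mul1m.
Qed.

Lemma is_unitM_factorl a b : unit (a ** b) -> unit a.
Proof.
move=> /is_unitMP[w [abw _]]; apply/is_unitMP; exists (b ** w).
by split; [rewrite mulmA | apply: mulm_eq1_sym; rewrite mulmA].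
Qed.

Lemma is_unitM_factorr a b : unit (a ** b) -> unit b.
Proof.
move=> /is_unitMP[w [_ wab]]; apply/is_unitMP; exists (w ** a).
by split; [apply: mulm_eq1_sym; rewrite -mulmA | rewrite -mulmA].
Qed.

Lemma is_unitMMl u m : unit u -> unit (m ** u) = unit m.
Proof. by move=> Uu; apply/idP/idP => [/is_unitM_factorl|/is_unitMM]; apply. Qed.

Lemma is_unitMMr u m : unit u -> unit (u ** m) = unit m.
Proof. by move=> Uu; apply/idP/idP => [/is_unitM_factorr|]; last exact: is_unitMM. Qed.

Lemma associatesMP a b :
  reflect (exists u v, [/\ unit u, unit v & a = u ** (b ** v)]) (assoc a b).
Proof.
apply: (iffP existsP) => [[u /existsP[v /and3P[Uu Uv /eqP ->]]]|[u [v [Uu Uv ->]]]].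
  by exists u, v.
by exists u; apply/existsP; exists v; rewrite Uu Uv eqxx.
Qed.

Lemma associatesM_refl a : assoc a a.
Proof. by apply/associatesMP; exists one, one; rewrite is_unitM1 mul1m mulm1. Qed.

Lemma associatesM_sym a b : assoc a b -> assoc b a.
Proof.
move=> /associatesMP[u [v [Uu Uv ->]]].
have [u' Uu' [_ u'u]] := is_unitM_inv Uu; have [v' Uv' [vv' _]] := is_unitM_inv Uv.
apply/associatesMP; exists u', v'; split => //.
by rewrite !mulmA u'u mul1m -mulmA vv' mulm1.
Qed.

Lemma associatesM_trans a b c : assoc a b -> assoc b c -> assoc a c.
Proof.
move=> /associatesMP[u [v [Uu Uv ->]]] /associatesMP[u' [v' [Uu' Uv' ->]]].
apply/associatesMP; exists (u ** u'), (v' ** v).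
by split; [exact: is_unitMM | exact: is_unitMM | rewrite !mulmA].
Qed.

Lemma associatesM_unit a b : assoc a b -> unit b -> unit a.
Proof. by move=> /associatesMP[u [v [Uu Uv ->]]] Ub; rewrite !is_unitMM. Qed.

Lemma associatesMMr u m p : unit u -> assoc (u ** m) p = assoc m p.
Proof.
move=> Uu; have [u' Uu' [_ u'u]] := is_unitM_inv Uu.
apply/idP/idP => /associatesMP[w [v [Uw Uv def_m]]]; apply/associatesMP.
  exists (u' ** w), v; split=> //; first exact: is_unitMM.
  by rewrite -mulmA -def_m mulmA u'u mul1m.
by exists (u ** w), v; split=> //; [exact: is_unitMM | rewrite def_m !mulmA].
Qed.

Lemma associatesMMl u m p : unit u -> assoc (m ** u) p = assoc m p.
Proof.
move=> Uu; have [u' Uu' [uu' _]] := is_unitM_inv Uu.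
apply/idP/idP => /associatesMP[w [v [Uw Uv def_m]]]; apply/associatesMP.
  exists w, (v ** u'); split=> //; first exact: is_unitMM.
  by rewrite (mulmA p) mulmA -def_m -mulmA uu' mulm1.
by exists w, (v ** u); split=> //; [exact: is_unitMM | rewrite def_m !mulmA].
Qed.

Lemma irreducibleM_unit p : irreducibleM mul p -> unit p = false.
Proof. by case/andP=> /negbTE. Qed.

Lemma unit_nassoc_irreducible m r : irreducibleM mul r -> ~~ (unit m && assoc m r).
Proof.
move=> irr_r; apply: contraFN (irreducibleM_unit irr_r) => /andP[Um /associatesM_sym].
by move/associatesM_unit; apply.
Qed.

Lemma irreducibleM_nassoc_mul p m m' :
  irreducibleM mul p -> ~~ unit m -> ~~ unit m' -> ~~ assoc (m ** m') p.
Proof.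
move=> /andP[_ /forallP irr_p] Nm Nm'.
apply/negP => /associatesM_sym /associatesMP[u [v [Uu Uv def_p]]].
have /forallP/(_ (m' ** v)) := irr_p (u ** m).
rewrite def_p !mulmA eqxx /=.
by case/orP=> [/is_unitM_factorr|/is_unitM_factorl]; apply/negP.
Qed.

End FiniteMonoid.

Section Quotient.
Variable k : fieldType.
Local Notation I := (@in_idealI k).
Local Notation x := (varx k).
Local Notation y := (vary k).

Lemma in_idealI0 : I 0. Proof. by exists 0, 0, 0; rewrite !mul0r !addr0. Qed.

Lemma in_idealID (P Q : {mpoly k[2]}) : I P -> I Q -> I (P + Q).
Proof.
move=> [a [b [c ->]]] [a' [b' [c' ->]]]; exists (a + a'), (b + b'), (c + c'); ring.
Qed.

Lemma in_idealMl (P Q : {mpoly k[2]}) : I P -> I (Q * P).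
Proof. by move=> [a [b [c ->]]]; exists (Q * a), (Q * b), (Q * c); ring. Qed.

Lemma in_idealZ c (P : {mpoly k[2]}) : I P -> I (c *: P).
Proof. by rewrite -mul_mpolyC; apply: in_idealMl. Qed.

Lemma in_idealN (P : {mpoly k[2]}) : I P -> I (- P).
Proof. by rewrite -mulN1r; apply: in_idealMl. Qed.

Lemma in_idealI_mul_xy (a b c d : {mpoly k[2]}) : I ((a * x + b * y) * (c * x + d * y)).
Proof. by exists (a * c), (b * d), (a * d + b * c); ring. Qed.

Lemma eqmodI_refl (P : {mpoly k[2]}) : eqmodI P P.
Proof. by rewrite /eqmodI subrr; exact: in_idealI0. Qed.

Lemma eqmodI_sym (P Q : {mpoly k[2]}) : eqmodI P Q -> eqmodI Q P.
Proof. by rewrite /eqmodI => /in_idealN; rewrite opprB. Qed.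

Lemma eqmodI_sum (J : finType) (F G : J -> {mpoly k[2]}) :
  (forall i, eqmodI (F i) (G i)) -> eqmodI (\sum_i F i) (\sum_i G i).
Proof.
move=> FG; rewrite /eqmodI -sumrB.
by apply: big_ind => [||i _]; [exact: in_idealI0 | exact: in_idealID | exact: FG].
Qed.

Lemma eqmodI_scale c (P Q : {mpoly k[2]}) : eqmodI P Q -> eqmodI (c *: P) (c *: Q).
Proof. by rewrite /eqmodI -scalerBr; apply: in_idealZ. Qed.

Definition linear_xy (c0 c1 c2 : k) : {mpoly k[2]} := c0 *: 1 + c1 *: x + c2 *: y.

Definition congr_linear_xy (P : {mpoly k[2]}) : Prop :=
  exists c0 c1 c2, eqmodI P (linear_xy c0 c1 c2).

Lemma congr_linear_xyD (P Q : {mpoly k[2]}) :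
  congr_linear_xy P -> congr_linear_xy Q -> congr_linear_xy (P + Q).
Proof.
move=> [c0 [c1 [c2 PE]]] [d0 [d1 [d2 QE]]]; exists (c0 + d0), (c1 + d1), (c2 + d2).
have := in_idealID PE QE; congr in_idealI.
by rewrite /linear_xy !scalerDl; ring.
Qed.

Lemma congr_linear_xyM (P Q : {mpoly k[2]}) :
  congr_linear_xy P -> congr_linear_xy Q -> congr_linear_xy (P * Q).
Proof.
move=> [c0 [c1 [c2 PE]]] [d0 [d1 [d2 QE]]].
exists (c0 * d0), (c0 * d1 + c1 * d0), (c0 * d2 + c2 * d0); rewrite /eqmodI.
have -> : P * Q - linear_xy (c0 * d0) (c0 * d1 + c1 * d0) (c0 * d2 + c2 * d0) =
    Q * (P - linear_xy c0 c1 c2) + linear_xy c0 c1 c2 * (Q - linear_xy d0 d1 d2) +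
    (c1%:MP * x + c2%:MP * y) * (d1%:MP * x + d2%:MP * y).
  by rewrite /linear_xy -!mul_mpolyC !mpolyCD !mpolyCM; ring.
by apply: in_idealID; [apply: in_idealID; apply: in_idealMl | apply: in_idealI_mul_xy].
Qed.

Lemma congr_linear_xyC c : congr_linear_xy c%:MP.
Proof.
exists c, 0, 0; rewrite /linear_xy !scale0r !addr0 -mul_mpolyC mulr1.
exact: eqmodI_refl.
Qed.

Lemma congr_linear_xyX (i : 'I_2) : congr_linear_xy 'X_i.
Proof.
have [-> | ->] : i = Ordinal (isT : 0 < 2)%N \/ i = Ordinal (isT : 1 < 2)%N.
  by case: i => -[|[|//]] lti; [left | right]; apply: val_inj.
- by exists 0, 1, 0; rewrite /linear_xy !scale0r scale1r add0r addr0; exact: eqmodI_refl.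
- by exists 0, 0, 1; rewrite /linear_xy !scale0r scale1r !add0r; exact: eqmodI_refl.
Qed.

Lemma congr_linear_xy_all (P : {mpoly k[2]}) : congr_linear_xy P.
Proof.
rewrite (mpolyE P); apply: big_ind => [||m _]; first exact: (congr_linear_xyC 0).
  exact: congr_linear_xyD.
rewrite -mul_mpolyC; apply: congr_linear_xyM; first exact: congr_linear_xyC.
rewrite mpolyXE_id; apply: big_ind => [||i _]; first exact: (congr_linear_xyC 1).
  exact: congr_linear_xyM.
elim: (m i) => [|n IHn]; first exact: (congr_linear_xyC 1).
by rewrite exprS; apply: congr_linear_xyM => //; exact: congr_linear_xyX.
Qed.

End Quotient.

Section LinearExtension.
Variables (M : finType) (one : M) (mul : Monoid.law one) (k : fieldType) (p q : M).
Local Notation f := (fmap mul k p q).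
Local Notation F := (Fmap mul k p q).

Lemma Fmap_delta m : F (kM_delta k m) = f m.
Proof.
rewrite /Fmap (bigD1 m) //= ffunE eqxx scale1r big1 ?addr0 // => m' /negbTE m'm.
by rewrite ffunE m'm scale0r.
Qed.

Lemma FmapD (a b : {ffun M -> k}) : F (a + b) = F a + F b.
Proof. by rewrite /Fmap -big_split; apply: eq_bigr => m _; rewrite ffunE scalerDl. Qed.

Lemma FmapZ c (a : {ffun M -> k}) : F [ffun m => c * a m] = c *: F a.
Proof. by rewrite /Fmap scaler_sumr; apply: eq_bigr => m _; rewrite ffunE scalerA. Qed.

Lemma Fmap_kM_mul (a b : {ffun M -> k}) :
  F (kM_mul mul a b) = \sum_u \sum_v (a u * b v) *: f (mul u v).
Proof.
rewrite /Fmap; under eq_bigr => m _ do rewrite ffunE scaler_suml.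
rewrite exchange_big; apply: eq_bigr => u _.
under eq_bigr => m _ do rewrite scaler_suml.
rewrite (exchange_big_dep xpredT) //=; apply: eq_bigr => v _.
by rewrite (big_pred1 (mul u v)) // => m; rewrite /= eq_sym.
Qed.

Lemma FmapM_expand (a b : {ffun M -> k}) :
  F a * F b = \sum_u \sum_v (a u * b v) *: (f u * f v).
Proof.
rewrite /Fmap mulr_suml; apply: eq_bigr => u _; rewrite mulr_sumr.
by apply: eq_bigr => v _; rewrite -scalerAl -scalerAr scalerA.
Qed.

Lemma Fmap_kM_mul_eqmodI (a b : {ffun M -> k}) :
  (forall m m', eqmodI (f (mul m m')) (f m * f m')) ->
  eqmodI (F (kM_mul mul a b)) (F a * F b).
Proof.
move=> f_mul; rewrite Fmap_kM_mul FmapM_expand.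
by do 2!apply: eqmodI_sum => ?; apply: eqmodI_scale.
Qed.

End LinearExtension.

Section AssociateClasses.
Variables (M : finType) (one : M) (mul : Monoid.law one) (k : fieldType) (p q : M).
Hypotheses (irr_p : irreducibleM mul p) (irr_q : irreducibleM mul q).
Hypothesis npq : ~~ associatesM mul p q.
Local Notation unit := (is_unitM mul).
Local Notation assoc := (associatesM mul).
Local Notation f := (fmap mul k p q).

Lemma nassoc_both m : ~~ (assoc m p && assoc m q).
Proof. by apply: contraNN npq => /andP[/associatesM_sym mp]; apply: associatesM_trans. Qed.

Lemma fmap_unit m : unit m -> f m = 1.
Proof. by rewrite /fmap => ->. Qed.

Lemma fmap_p : f p = varx k.
Proof. by rewrite /fmap irreducibleM_unit // associatesM_refl. Qed.

Lemma fmap_q : f q = vary k.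
Proof.
rewrite /fmap irreducibleM_unit // associatesM_refl.
by have /negbTE -> : ~~ assoc q p by apply: contraNN npq; apply: associatesM_sym.
Qed.

Lemma fmapMr u m : unit u -> f (mul u m) = f m.
Proof. by move=> Uu; rewrite /fmap is_unitMMr // !associatesMMr. Qed.

Lemma fmapMl u m : unit u -> f (mul m u) = f m.
Proof. by move=> Uu; rewrite /fmap is_unitMMl // !associatesMMl. Qed.

Lemma fmap_mul_nonunits m m' : ~~ unit m -> ~~ unit m' -> f (mul m m') = 0.
Proof.
move=> Nm Nm'; have /negbTE Nmm' : ~~ unit (mul m m').
  by apply: contra Nm => /is_unitM_factorl.
by rewrite /fmap Nmm' !(negbTE (irreducibleM_nassoc_mul _ Nm Nm')).
Qed.

Lemma fmap_nonunit_xy m : ~~ unit m -> exists a b, f m = a * varx k + b * vary k.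
Proof.
move=> /negbTE Nm; rewrite /fmap Nm.
case: ifP => _; first by exists 1, 0; rewrite mul1r mul0r addr0.
case: ifP => _; first by exists 0, 1; rewrite mul1r mul0r add0r.
by exists 0, 0; rewrite !mul0r addr0.
Qed.

Lemma fmap_mul_eqmodI m m' : eqmodI (f (mul m m')) (f m * f m').
Proof.
have [Um | Nm] := boolP (unit m).
  by rewrite fmapMr // (fmap_unit Um) mul1r; exact: eqmodI_refl.
have [Um' | Nm'] := boolP (unit m').
  by rewrite fmapMl // (fmap_unit Um') mulr1; exact: eqmodI_refl.
have [a [b ->]] := fmap_nonunit_xy Nm; have [c [d ->]] := fmap_nonunit_xy Nm'.
by rewrite fmap_mul_nonunits // /eqmodI sub0r; apply/in_idealN/in_idealI_mul_xy.
Qed.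

Lemma Fmap_onto_linear_xy c0 c1 c2 : exists a, Fmap mul k p q a = linear_xy c0 c1 c2.
Proof.
exists ([ffun m => c0 * kM_delta k one m] + [ffun m => c1 * kM_delta k p m]
        + [ffun m => c2 * kM_delta k q m]).
by rewrite !FmapD !FmapZ !Fmap_delta fmap_unit ?is_unitM1 // fmap_p fmap_q.
Qed.

End AssociateClasses.

Theorem lemma1 (M : finType) (one : M) (mul : Monoid.law one) (k : fieldType)
    (p q : M) :
  irreducibleM mul p -> irreducibleM mul q -> ~~ associatesM mul p q ->
  (* well-definedness: the defining cases are mutually exclusive *)
  (forall m : M,
     ~~ (is_unitM mul m && associatesM mul m p) /\
     ~~ (is_unitM mul m && associatesM mul m q) /\
     ~~ (associatesM mul m p && associatesM mul m q)) /\
  (* f is a monoid homomorphism into k[x,y]/<x^2,y^2,xy> *)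
  eqmodI (fmap mul k p q one) 1 /\
  (forall m m' : M,
     eqmodI (fmap mul k p q (mul m m')) (fmap mul k p q m * fmap mul k p q m')) /\
  (* the induced map kM -> k[x,y]/<x^2,y^2,xy> extends f ... *)
  (forall m : M, Fmap mul k p q (@kM_delta M k m) = fmap mul k p q m) /\
  (* ... and is a k-algebra homomorphism ... *)
  (forall a b : {ffun M -> k},
     Fmap mul k p q (a + b) = Fmap mul k p q a + Fmap mul k p q b) /\
  (forall (c : k) (a : {ffun M -> k}),
     Fmap mul k p q [ffun m => c * a m] = c *: Fmap mul k p q a) /\
  eqmodI (Fmap mul k p q (@kM_delta M k one)) 1 /\
  (forall a b : {ffun M -> k},
     eqmodI (Fmap mul k p q (kM_mul mul a b))
            (Fmap mul k p q a * Fmap mul k p q b)) /\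
  (* ... which is surjective *)
  (forall P : {mpoly k[2]}, exists a : {ffun M -> k},
     eqmodI (Fmap mul k p q a) P).
Proof.
move=> irr_p irr_q npq.
have f1 : fmap mul k p q one = 1 by rewrite fmap_unit ?is_unitM1.
split.
  by move=> m; rewrite !unit_nassoc_irreducible ?nassoc_both.
split; first by rewrite f1; exact: eqmodI_refl.
split; first exact: fmap_mul_eqmodI.
split; first exact: Fmap_delta.
split; first exact: FmapD.
split; first exact: FmapZ.
split; first by rewrite Fmap_delta f1; exact: eqmodI_refl.
split; first by move=> a b; apply/Fmap_kM_mul_eqmodI/fmap_mul_eqmodI.
move=> P; have [c0 [c1 [c2 PE]]] := congr_linear_xy_all P.
have [a Fa] := Fmap_onto_linear_xy irr_p irr_q npq c0 c1 c2.
by exists a; rewrite Fa; apply: eqmodI_sym.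
Qed.
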